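(* Let $\Upsilon$ be a label cover instance and $\Gamma=(\tilde G,\tilde H)$ the random instance produced by the reduction described in the context. For every injective map $\varphi:V_{\tilde G}\to V_{\tilde H}$ (note that $V_{\tilde G}$ and $V_{\tilde H}$ do not depend on the randomness), $$\mathbb{E}[\mathrm{Val}_{QAP}(\Gamma,\varphi)]\le \alpha|E_G|N^2\,(\mathrm{OPT}_{LC}(\Upsilon)+\alpha).$$
   Context: A label cover instance $\Upsilon=(G=(V_G,E_G),\pi,[k])$ consists of a graph $G$ with $n=|V_G|$ vertices and edge set $E_G$, a label set $[k]=\{0,\dots,k-1\}$, and for each edge $(u,v)\in E_G$ a set $\pi_{uv}\subseteq[k]\times[k]$ of accepted label pairs. For a labeling $\Lambda:V_G\to[k]$, $\mathrm{Val}_{LC}(\Upsilon,\Lambda)=\frac{1}{|E_G|}\sum_{(u,v)\in E_G}\mathbf{1}[(\Lambda(u),\Lambda(v))\in\pi_{uv}]$, and $\mathrm{OPT}_{LC}(\Upsilon)=\max_\Lambda\mathrm{Val}_{LC}(\Upsilon,\Lambda)$. The reduction: let $N=\lceil n^4|E_G|k^5\rceil$ and $\alpha=1/n$. Set $V_{\tilde G}=V_G\times[N]$ and $V_{\tilde H}=V_G\times[k]\times[N]$. For every edge $(u,v)$ of $G$, independently choose a random set $\mathcal{E}_{uv}\subseteq[N]\times[N]$ containing each pair independently with probability $\alpha$. Let $E_{\tilde G}=\{((u,i),(v,j)):(u,v)\in E_G,(i,j)\in\mathcal{E}_{uv}\}$ and $E_{\tilde H}=\{((u,x,i),(v,y,j)):(u,v)\in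 E_G,(i,j)\in\mathcal{E}_{uv},(x,y)\in\pi_{uv}\}$. For an injective map $\varphi:V_{\tilde G}\to V_{\tilde H}$, $\mathrm{Val}_{QAP}(\Gamma,\varphi)=\sum_{(a,b)\in E_{\tilde G}}\mathbf{1}[(\varphi(a),\varphi(b))\in E_{\tilde H}]$. *)

From mathcomp Require Import all_boot all_order all_algebra.
Set Implicit Arguments. Unset Strict Implicit. Unset Printing Implicit Defensive.
Import Order.TTheory GRing.Theory Num.Theory.
Local Open Scope ring_scope.

(* A label cover instance: vertex type V (n = #|V|), directed edge set
   E ⊆ V × V without loops, label set 'I_k, constraints pi : edge -> {set 'I_k * 'I_k}. *)
Definition loopless (V : finType) (E : {set V * V}) : bool :=
  [forall e in E, e.1 != e.2].

Section LC.
Variables (R : realFieldType) (V : finType) (k : nat).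
Variables (E : {set V * V}) (pi : V * V -> {set 'I_k * 'I_k}).

Definition Val_LC (L : {ffun V -> 'I_k}) : R :=
  (#|[set e in E | (L e.1, L e.2) \in pi e]|)%:R / (#|E|)%:R.

(* max over all labelings (0 if there is none) *)
Definition OPT_LC : R := \big[Num.max/0]_(L : {ffun V -> 'I_k}) Val_LC L.

Definition redN : nat := (#|V| ^ 4 * #|E| * k ^ 5)%N.
Definition redAlpha : R := (#|V|%:R)^-1.

(* random choice: S e = \mathcal{E}_e ⊆ [N] × [N] for each edge e (S e = set0 off edges) *)
Definition choiceT := {ffun V * V -> {set 'I_redN * 'I_redN}}.

Definition probS (S : choiceT) : R :=
  \prod_(e in E) \prod_(p : 'I_redN * 'I_redN)
      (if p \in S e then redAlpha else 1 - redAlpha)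
  * \prod_(e in ~: E) (S e == set0)%:R.

Definition EGt (S : choiceT) : {set (V * 'I_redN) * (V * 'I_redN)} :=
  [set ab | ((ab.1.1, ab.2.1) \in E) && ((ab.1.2, ab.2.2) \in S (ab.1.1, ab.2.1))].

Definition EHt (S : choiceT) :
    {set (V * 'I_k * 'I_redN) * (V * 'I_k * 'I_redN)} :=
  [set cd | [&& (cd.1.1.1, cd.2.1.1) \in E,
               (cd.1.2, cd.2.2) \in S (cd.1.1.1, cd.2.1.1) &
               (cd.1.1.2, cd.2.1.2) \in pi (cd.1.1.1, cd.2.1.1)]].

Definition Val_QAP (S : choiceT) (phi : V * 'I_redN -> V * 'I_k * 'I_redN) : nat :=
  \sum_(ab in EGt S) ((phi ab.1, phi ab.2) \in EHt S).

Definition expVal_QAP (phi : V * 'I_redN -> V * 'I_k * 'I_redN) : R :=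
  \sum_(S : choiceT) probS S * (Val_QAP S phi)%:R.
End LC.

From mathcomp Require Import all_boot all_order all_algebra ring.
Set Implicit Arguments. Unset Strict Implicit. Unset Printing Implicit Defensive.
Import Order.TTheory GRing.Theory Num.Theory.
Local Open Scope ring_scope.

(* By linearity of expectation, E[Val_QAP] is a sum over the candidate edges
   x = ((u,i),(v,j)) of G~, with (u,v) in E, of the probability that both x and
   the pair phi(x) are edges, counted only when phi(x) lies over an edge of G
   whose constraint accepts the labels chosen by phi.  If x and phi(x) read
   different coins this probability is alpha^2, contributing at most
   alpha^2 |E| N^2.  Otherwise it is alpha, and the labels chosen by phi satisfy
   the edge of x itself; averaging over the choices f : V -> [N] of one copy per
   vertex, each of which induces a labeling, there are at most |E| N^2 OPT such x. *)

Lemma card_ffun_fix2 (V J : finType) (u v : V) (i j : J) : u != v ->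
  #|[pred f : {ffun V -> J} | (f u == i) && (f v == j)]| = (#|J| ^ (#|V| - 2))%N.
Proof.
move=> uv; have vu : (v == u) = false by rewrite eq_sym (negbTE uv).
pose F w : pred J := if w == u then pred1 i else if w == v then pred1 j else predT.
have -> : #|[pred f : {ffun V -> J} | (f u == i) && (f v == j)]| = #|family F|.
  apply: eq_card => f; rewrite !inE; apply/andP/familyP => [[fu fv] w | fF].
    by rewrite /F; case: ifP => [/eqP -> //|_]; case: ifP => [/eqP -> //|_].
  by split; [move: (fF u) | move: (fF v)]; rewrite /F eqxx // vu.
rewrite card_family foldrE big_image /= (bigD1 u) //= (bigD1 v) ?vu //=.
rewrite /F eqxx vu eqxx !card1 !mul1n.
rewrite (eq_bigr (fun=> #|J|)) => [|w /andP[/negbTE -> /negbTE ->]]; last by rewrite cardT.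
rewrite prod_nat_const; congr (_ ^ _)%N.
rewrite -(cardsC [set u; v]) cards2 uv addKn; apply: eq_card => w.
by rewrite !inE negb_or.
Qed.

Lemma sum_ffun_at2 (M : nmodType) (V J : finType) (u v : V) (G : J -> J -> M) :
  u != v ->
  \sum_(f : {ffun V -> J}) G (f u) (f v) =
    (\sum_i \sum_j G i j) *+ (#|J| ^ (#|V| - 2)).
Proof.
move=> uv.
have split_at (f : {ffun V -> J}) :
    G (f u) (f v) = \sum_i \sum_j G i j *+ ((f u == i) && (f v == j)).
  rewrite (bigD1 (f u)) //= (bigD1 (f v)) //= !eqxx mulr1n.
  rewrite big1 => [|j /negbTE fvj]; last by rewrite eq_sym fvj andbF.
  rewrite addr0 big1 ?addr0 // => i /negbTE fui.
  by rewrite big1 // => j _; rewrite eq_sym fui.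
rewrite (eq_bigr _ (fun f _ => split_at f)) exchange_big -sumrMnl.
apply: eq_bigr => i _; rewrite exchange_big -sumrMnl; apply: eq_bigr => j _.
rewrite sumrMnr -(card_ffun_fix2 i j uv) -sum1_card; congr (_ *+ _).
by rewrite [RHS]big_mkcond; apply: eq_bigr => f _; rewrite inE; case: (_ && _).
Qed.

Lemma sum_subsets_prod (R : comPzSemiRingType) (T : finType) (h : T -> bool -> R) :
  \sum_(X : {set T}) \prod_t h t (t \in X) = \prod_t (h t true + h t false).
Proof.
under [RHS]eq_bigr do rewrite -big_bool.
rewrite bigA_distr_bigA /= (reindex (fun g : {ffun T -> bool} => [set t | g t])) /=.
  by apply: eq_bigr => g _; apply: eq_bigr => t _; rewrite inE.
exists (fun X : {set T} => [ffun t => t \in X]) => [g _|X _].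
  by apply/ffunP => t; rewrite ffunE inE.
by apply/setP => t; rewrite inE ffunE.
Qed.

Lemma sum_bernoulli_indicators (R : comPzRingType) (T : finType) (a : R) (Q : {set T}) :
  \sum_(X : {set T})
     (\prod_t (if t \in X then a else 1 - a)) * \prod_(t in Q) (t \in X)%:R
  = a ^+ #|Q|.
Proof.
under eq_bigr do rewrite [X in _ * X]big_mkcond -big_split /=.
rewrite (sum_subsets_prod (fun t b =>
  (if b then a else 1 - a) * (if t \in Q then b%:R else 1))).
rewrite -prodr_const [RHS]big_mkcond; apply: eq_bigr => t _ /=.
by case: (t \in Q); rewrite ?mulr1 ?mulr0 ?addr0 // addrC subrK.
Qed.

Section LabelCover.
Variables (R : realFieldType) (V : finType) (k : nat).
Variables (E : {set V * V}) (pi : V * V -> {set 'I_k * 'I_k}).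

Local Notation OPT := (@OPT_LC R V k E pi).

Lemma card_satisfied_le_OPT (L : {ffun V -> 'I_k}) :
  (#|[set e in E | (L e.1, L e.2) \in pi e]|)%:R <= (#|E|)%:R * OPT.
Proof.
have [E0|E_gt0] := posnP #|E|.
  rewrite E0 mul0r (_ : #|_| = 0)%N //; apply/eqP; rewrite -leqn0 -E0.
  by apply/subset_leq_card/subsetP => e; rewrite inE => /andP[].
rewrite -[X in X <= _](divfK (_ : (#|E|)%:R != 0 :> R)) ?pnatr_eq0 -?lt0n //.
by rewrite mulrC ler_wpM2l ?ler0n //; apply: (le_bigmax _ (@Val_LC R V k E pi)).
Qed.

Hypothesis hE : loopless E.

Lemma sum_satisfied_le_OPT (J : finType) (g : V -> J -> 'I_k) :
  \sum_(e in E) \sum_i \sum_j ((g e.1 i, g e.2 j) \in pi e)%:R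
    <= (#|E|)%:R * #|J|%:R ^+ 2 * OPT.
Proof.
have [E0|[e0 He0]] := set_0Vmem E; first by rewrite E0 big_set0 cards0 !mul0r.
have loopfree e : e \in E -> e.1 != e.2 by move/forall_inP: hE; apply.
have [J0|J_gt0] := posnP #|J|.
  rewrite J0 expr0n mulr0 mul0r big1 // => e _.
  by rewrite big1 // => i; move: (card0_eq J0 i); rewrite !inE.
pose C : R := #|J|%:R ^+ (#|V| - 2).
have C_gt0 : 0 < C by rewrite exprn_gt0 // ltr0n.
have V_ge2 : (2 <= #|V|)%N.
  by have := subset_leq_card (subsetT [set e0.1; e0.2]); rewrite cards2 loopfree ?cardsT.
pose G e i j : R := ((g e.1 i, g e.2 j) \in pi e)%:R.
have average e : e \in E ->
    (\sum_i \sum_j G e i j) * C = \sum_(f : {ffun V -> J}) G e (f e.1) (f e.2).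
  by move=> He; rewrite sum_ffun_at2 ?loopfree // -mulr_natr natrX.
have labeling (f : {ffun V -> J}) :
    \sum_(e in E) G e (f e.1) (f e.2) <= (#|E|)%:R * OPT.
  pose L : {ffun V -> 'I_k} := [ffun w => g w (f w)].
  apply: le_trans _ (card_satisfied_le_OPT L); rewrite -sum1_card natr_sum.
  rewrite [X in _ <= X]big_mkcond [X in X <= _]big_mkcond /=; apply: ler_sum => e _.
  by rewrite inE /G !ffunE; case: (e \in E); case: (_ \in pi e).
rewrite -(ler_pM2r C_gt0) mulr_suml (eq_bigr _ average) exchange_big /=.
apply: le_trans (ler_sum _ (fun f _ => labeling f)) _.
rewrite sumr_const card_ffun -[X in X <= _]mulr_natr natrX -(subnKC V_ge2) exprD.
by rewrite le_eqVlt; apply/predU1P; left; rewrite /C; ring.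
Qed.

Local Notation N := (@redN V k E).
Local Notation alpha := (@redAlpha R V).
Local Notation prob := (@probS R V k E).

Lemma alpha_ge0 : 0 <= alpha.
Proof. by rewrite invr_ge0 ler0n. Qed.

Lemma probS_indicators (Q : {set (V * V) * ('I_N * 'I_N)}) :
  (forall x, x \in Q -> x.1 \in E) ->
  \sum_(S : @choiceT V k E) prob S * \prod_(x in Q) (x.2 \in S x.1)%:R = alpha ^+ #|Q|.
Proof.
move=> QE; pose Qe e := [set p | (e, p) \in Q].
have Qe0 e : e \notin E -> Qe e = set0.
  by move=> He; apply/setP => p; rewrite !inE; apply: contraNF He => /QE.
pose bern (X : {set 'I_N * 'I_N}) := \prod_p (if p \in X then alpha else 1 - alpha).
pose K e (X : {set 'I_N * 'I_N}) : R :=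
  if e \in E then bern X * \prod_(p in Qe e) (p \in X)%:R else (X == set0)%:R.
have factor S : prob S * \prod_(x in Q) (x.2 \in S x.1)%:R = \prod_e K e (S e).
  have -> : \prod_(x in Q) (x.2 \in S x.1)%:R
            = \prod_e \prod_(p in Qe e) (p \in S e)%:R :> R.
    by rewrite pair_big_dep; apply: eq_bigl => -[e p]; rewrite !inE.
  rewrite /probS (big_mkcond (mem E)) (big_mkcond (mem (~: E))) -!big_split /=.
  apply: eq_bigr => e _; rewrite /K inE; case: (boolP (e \in E)) => He /=.
    by rewrite mulr1.
  by rewrite Qe0 // big_set0 mul1r mulr1.
have sumK e : \sum_X K e X = alpha ^+ #|Qe e|.
  rewrite /K; case: (boolP (e \in E)) => He; first exact: sum_bernoulli_indicators.
  rewrite Qe0 // cards0 (bigD1 set0) //= eqxx big1 ?addr0 // => X.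
  by move/negbTE ->.
rewrite (eq_bigr _ (fun S _ => factor S)) -bigA_distr_bigA.
rewrite (eq_bigr _ (fun e _ => sumK e)) prodrXr; congr (_ ^+ _).
under eq_bigr do rewrite -sum1_card.
by rewrite pair_big_dep -sum1_card; apply: eq_bigl => -[e p]; rewrite !inE.
Qed.

Definition chosen (S : @choiceT V k E) (x : (V * V) * ('I_N * 'I_N)) : bool :=
  x.2 \in S x.1.

Lemma probS_pair (x y : (V * V) * ('I_N * 'I_N)) : x.1 \in E -> y.1 \in E ->
  \sum_(S : @choiceT V k E) prob S * (chosen S x && chosen S y)%:R
    = alpha ^+ #|[set x; y]|.
Proof.
move=> xE yE; rewrite -probS_indicators => [|z]; last by rewrite !inE => /orP[] /eqP ->.
apply: eq_bigr => S _; congr (_ * _).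
have [<-|xy] := eqVneq x y; first by rewrite setUid big_set1 andbb.
by rewrite big_setU1 ?inE // big_set1 /= -natrM mulnb.
Qed.

Section Reduction.
Variable phi : V * 'I_N -> V * 'I_k * 'I_N.

(* A position x = ((u,v),(i,j)) stands for the candidate edge ((u,i),(v,j)) of G~
   and for the coin deciding whether (i,j) \in S (u,v); image_pos x is the
   position of the pair phi(u,i), phi(v,j) with its labels forgotten. *)
Definition src (x : (V * V) * ('I_N * 'I_N)) : V * 'I_N := (x.1.1, x.2.1).
Definition dst (x : (V * V) * ('I_N * 'I_N)) : V * 'I_N := (x.1.2, x.2.2).

Definition image_pos x : (V * V) * ('I_N * 'I_N) :=
  (((phi (src x)).1.1, (phi (dst x)).1.1), ((phi (src x)).2, (phi (dst x)).2)).
Definition labels x : 'I_k * 'I_k := ((phi (src x)).1.2, (phi (dst x)).1.2).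

Definition admissible x : bool :=
  [&& x.1 \in E, (image_pos x).1 \in E & labels x \in pi (image_pos x).1].
Definition satisfied x : bool := (x.1 \in E) && (labels x \in pi x.1).

Lemma Val_QAP_E S :
  Val_QAP pi S phi = (\sum_x [&& admissible x, chosen S x & chosen S (image_pos x)])%N.
Proof.
rewrite /Val_QAP big_mkcond (reindex (fun x => (src x, dst x))) /=; last first.
  exists (fun ab : (V * 'I_N) * (V * 'I_N) => ((ab.1.1, ab.2.1), (ab.1.2, ab.2.2))).
    by move=> [[u v] [i j]].
  by move=> [[u i] [v j]].
apply: eq_bigr => -[[u v] [i j]] _; rewrite /admissible /chosen !inE /=.
by rewrite /labels; do !case: (_ \in _).
Qed.

Lemma expVal_QAP_E :
  @expVal_QAP R V k E pi phi
    = \sum_x (admissible x)%:R * alpha ^+ #|[set x; image_pos x]|.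
Proof.
rewrite /expVal_QAP; under eq_bigr do rewrite Val_QAP_E natr_sum mulr_sumr.
rewrite exchange_big; apply: eq_bigr => x _.
have [/and3P[xE yE _]|_] := boolP (admissible x).
  by rewrite mul1r -probS_pair.
by rewrite mul0r big1 // => S _; rewrite mulr0.
Qed.

Lemma admissible_term_le x :
  (admissible x)%:R * alpha ^+ #|[set x; image_pos x]|
    <= (x.1 \in E)%:R * alpha ^+ 2 + alpha * (satisfied x)%:R.
Proof.
have [/and3P[xE _ ok]|_] := boolP (admissible x); last first.
  by rewrite mul0r addr_ge0 ?mulr_ge0 ?exprn_ge0 ?ler0n ?alpha_ge0.
rewrite xE !mul1r; have [fixed|moved] := eqVneq x (image_pos x).
  rewrite -fixed in ok *; rewrite setUid cards1 /satisfied xE ok mulr1.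
  by rewrite lerDr exprn_ge0 ?alpha_ge0.
by rewrite cards2 moved lerDl mulr_ge0 ?ler0n ?alpha_ge0.
Qed.

Lemma sum_edge_indicator :
  \sum_(x : (V * V) * ('I_N * 'I_N)) ((x.1 \in E)%:R : R) = (#|E|)%:R * N%:R ^+ 2.
Proof.
rewrite -(pair_bigA _ (fun e _ => (e \in E)%:R)) /=.
under eq_bigr do rewrite sumr_const card_prod card_ord.
rewrite sumrMnl -[LHS]mulr_natr (natrM R N N) -expr2; congr (_ * _).
by rewrite -sum1_card natr_sum [RHS]big_mkcond; apply: eq_bigr => e _; case: (e \in E).
Qed.

Lemma sum_satisfied_le :
  \sum_x ((satisfied x)%:R : R) <= (#|E|)%:R * N%:R ^+ 2 * OPT.
Proof.
have := @sum_satisfied_le_OPT _ (fun w i => (phi (w, i)).1.2).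
rewrite card_ord; apply: le_trans.
rewrite -(pair_bigA _ (fun e p => ((satisfied (e, p))%:R : R))) [X in _ <= X]big_mkcond /=.
apply/ler_sum => e _; rewrite pair_bigA /satisfied /labels /=.
by case: (e \in E) => //; rewrite big1.
Qed.

End Reduction.

End LabelCover.

Theorem mainTheorem6 (R : realFieldType) (V : finType) (k : nat)
  (E : {set V * V}) (pi : V * V -> {set 'I_k * 'I_k})
  (hE : loopless E)
  (phi : V * 'I_(@redN V k E) -> V * 'I_k * 'I_(@redN V k E))
  (hphi : injective phi) :
  @expVal_QAP R V k E pi phi <=
    @redAlpha R V * (#|E|)%:R * ((@redN V k E)%:R ^+ 2)
      * (@OPT_LC R V k E pi + @redAlpha R V).
Proof.
(* The bound holds for every map phi. *)
rewrite expVal_QAP_E.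
apply: le_trans (ler_sum _ (fun x _ => admissible_term_le R pi phi x)) _.
rewrite big_split /= -mulr_suml -mulr_sumr sum_edge_indicator.
have := ler_wpM2l (alpha_ge0 R V) (sum_satisfied_le R pi hE phi).
set a := redAlpha R V; set c := _ * _ ^+ 2; set O := OPT_LC R E pi => sat_le.
rewrite [X in _ <= X](_ : _ = c * a ^+ 2 + a * (c * O)); first by rewrite lerD2l.
by rewrite /c; ring.
Qed.
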